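(* Let $I\subseteq\mathbb{R}$ be an interval, let $f:I\to\mathbb{R}$ be differentiable on the interior $I^{\circ}$, let $a,b\in I^{\circ}$ with $a<b$, assume $f'\in L[a,b]$, and let $\alpha,\lambda\in[0,1]$. Suppose that $|f'|^{q}$ is $s$-concave on $[a,b]$ for some fixed $s\in(0,1]$ and some $q>1$, and let $p$ satisfy $\frac1p+\frac1q=1$. Define $$I_f(\lambda,\alpha,a,b)=\lambda\big(\alpha f(a)+(1-\alpha)f(b)\big)+(1-\lambda)f(\alpha a+(1-\alpha)b)-\frac{1}{b-a}\int_a^b f(x)\,dx,$$ $$E_f(\alpha,q)=(1-\alpha)\left|f'\!\left(\tfrac{(1-\alpha)b+(1+\alpha)a}{2}\right)\right|^q,\qquad F_f(\alpha,q)=\alpha\left|f'\!\left(\tfrac{(2-\alpha)b+\alpha a}{2}\right)\right|^q,$$ $$\varepsilon_1(\alpha,\lambda,p)=(\alpha\lambda)^{p+1}+(1-\alpha-\alpha\lambda)^{p+1},\qquad \varepsilon_2(\alpha,\lambda,p)=(\alpha\lambda)^{p+1}-(\alpha\lambda-1+\alpha)^{p+1}.$$ Then $|I_f(\lambda,\alpha,a,b)|\leq (b-a)\,2^{\frac{s-1}{q}}\left(\frac{1}{p+1}\right)^{1/p}\cdot K$, where $K=\varepsilon_1^{1/p}(\alpha,\lambda,p)E_f^{1/q}(\alpha,q)+\varepsilon_1^{1/p}(1-\alpha,\lambda,p)F_f^{1/q}(\alpha,q)$ if $\alpha\lambda\leq 1-\alpha\leq 1-\lambda(1-\alpha)$;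 $K=\varepsilon_1^{1/p}(\alpha,\lambda,p)E_f^{1/q}(\alpha,q)+\varepsilon_2^{1/p}(1-\alpha,\lambda,p)F_f^{1/q}(\alpha,q)$ if $\alpha\lambda\leq 1-\lambda(1-\alpha)\leq 1-\alpha$; $K=\varepsilon_2^{1/p}(\alpha,\lambda,p)E_f^{1/q}(\alpha,q)+\varepsilon_1^{1/p}(1-\alpha,\lambda,p)F_f^{1/q}(\alpha,q)$ if $1-\alpha\leq\alpha\lambda\leq 1-\lambda(1-\alpha)$.
   Context: For a fixed $s\in(0,1]$, a function $g:[a,b]\to[0,\infty)$ is called $s$-concave (in the second sense) on $[a,b]$ if $g(\theta x+(1-\theta)y)\geq \theta^{s}g(x)+(1-\theta)^{s}g(y)$ for all $x,y\in[a,b]$ and all $\theta\in[0,1]$. *)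

From HB Require Import structures.
From mathcomp Require Import all_boot all_order all_algebra.
From mathcomp Require Import all_classical all_reals all_analysis.
Set Implicit Arguments. Unset Strict Implicit. Unset Printing Implicit Defensive.
Import Order.TTheory GRing.Theory Num.Theory.
Import numFieldNormedType.Exports.
Local Open Scope classical_set_scope.
Local Open Scope ring_scope.

Definition s_concave (R : realType) (s : R) (g : R -> R) (a b : R) : Prop :=
  (forall x, x \in `[a, b] -> 0 <= g x) /\
  (forall x y t, x \in `[a, b] -> y \in `[a, b] -> 0 <= t <= 1 ->
     t `^ s * g x + (1 - t) `^ s * g y <= g (t * x + (1 - t) * y)).

Definition I_f (R : realType) (f : R -> R) (lam al a b : R) : R :=
  lam * (al * f a + (1 - al) * f b) + (1 - lam) * f (al * a + (1 - al) * b)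
  - (b - a)^-1 * Rintegral lebesgue_measure `[a, b] f.

Definition E_f (R : realType) (f : R -> R) (a b al q : R) : R :=
  (1 - al) * `| derive1 f (((1 - al) * b + (1 + al) * a) / 2) | `^ q.

Definition F_f (R : realType) (f : R -> R) (a b al q : R) : R :=
  al * `| derive1 f (((2 - al) * b + al * a) / 2) | `^ q.

Definition eps1 (R : realType) (al lam p : R) : R :=
  (al * lam) `^ (p + 1) + (1 - al - al * lam) `^ (p + 1).

Definition eps2 (R : realType) (al lam p : R) : R :=
  (al * lam) `^ (p + 1) - (al * lam - 1 + al) `^ (p + 1).

From HB Require Import structures.
From mathcomp Require Import all_boot all_order all_algebra.
From mathcomp Require Import all_classical all_reals all_analysis.
From mathcomp Require Import ring lra.
Import Order.TTheory GRing.Theory Num.Theory.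
Import numFieldNormedType.Exports.
Local Open Scope classical_set_scope.
Local Open Scope ring_scope.

(* Put c = al a + (1 - al) b.  Integrating by parts, I_f is the sum of the
   integrals of (x - z) f'(x) / (b - a) over [a, c] and over [c, b], with
   z = a + al lam (b - a), resp. z = a + (1 - lam (1 - al)) (b - a).  Hoelder's
   inequality bounds each piece by (int |x - z|^p)^(1/p) (int |f'|^q)^(1/q).
   The first factor is an increment of the signed power u |u|^p / (p + 1),
   giving eps1 when z lies in the interval of integration and eps2 otherwise;
   the second is at most (length) |f'|^q(midpoint), by the Hermite-Hadamard
   inequality for the concave function |f'|^q.  No integral of f' is formed:
   both inequalities are proved by comparing derivatives of primitives, using
   Young's inequality pointwise and the supergradient line of |f'|^q at the
   midpoint.  Finally an s-concave function with s < 1 vanishes (take x = y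
   and t = 1/2), so only s = 1, where 2^((s-1)/q) = 1, carries content. *)

Section SignedPower.
Context {R : realType}.
Variable p : R.
Hypothesis p_gt0 : 0 < p.

Definition spow (u : R) : R := u * `|u| `^ p.

Lemma spowN u : spow (- u) = - spow u.
Proof. by rewrite /spow normrN mulNr. Qed.

Lemma spowE u : 0 <= u -> spow u = u `^ (p + 1).
Proof.
move=> u0; have p1_gt0 : 0 < p + 1 by rewrite ltr_wpDr.
by rewrite /spow ger0_norm// -(mulr_powRB1 u0 p1_gt0) addrK.
Qed.

Lemma ltr_spow u v : u < v -> spow u < spow v.
Proof.
have p1_gt0 : 0 < p + 1 by rewrite ltr_wpDr.
have ge0_lt x y : 0 <= x -> x < y -> spow x < spow y.
  move=> x0 xy; have y0 := le_trans x0 (ltW xy).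
  by rewrite !spowE// gt0_ltr_powR.
move=> uv; have [u0|u_lt0] := leP 0 u; first exact: ge0_lt.
have [v0|v_lt0] := leP 0 v.
  apply: (lt_le_trans (y := 0)); last by rewrite spowE ?powR_ge0.
  by rewrite -oppr_gt0 -spowN spowE ?powR_gt0 ?oppr_ge0 ?oppr_gt0// ltW.
by rewrite -ltrN2 -!spowN ge0_lt ?oppr_ge0 ?ltrN2// ltW.
Qed.

Lemma normr_powR_cvg0 : (fun u : R => `|u| `^ p) @ 0^' --> (0 : R).
Proof.
apply/cvgr0Pnorm_lt => e e_gt0.
near=> u.
have hu : `|u| < e `^ p^-1 by near: u; apply: dnbhs0_lt; rewrite powR_gt0.
rewrite ger0_norm ?powR_ge0//.
rewrite -[e](@powRr1 _ e (ltW e_gt0)) -(mulVf (lt0r_neq0 p_gt0)) powRrM.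
by rewrite gt0_ltr_powR// nnegrE powR_ge0.
Unshelve. all: by end_near. Qed.

Lemma is_derive_spow (u : R) : is_derive u 1 spow ((p + 1) * `|u| `^ p).
Proof.
have p1_gt0 : 0 < p + 1 by rewrite ltr_wpDr.
have [u_lt0|u_gt0|->] := ltgtP u 0.
- have spow_near : \near u, - (- u) `^ (p + 1) = spow u.
    near=> v; have v_lt0 : v < 0 by near: v; exact: lt_nbhsl.
    by rewrite -spowE ?oppr_ge0 ?ltW// spowN opprK.
  apply: near_eq_is_derive spow_near _.
  have := is_deriveN (is_derive1_comp (is_derive1_powR (p + 1) _)
    (is_deriveN (is_derive_id u 1))).
  rewrite oppr_gt0 ltr0_norm// addrK => /(_ u_lt0) der.
  by apply: is_derive_eq der _; rewrite /= mulrN1 opprK.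
- have spow_near : \near u, u `^ (p + 1) = spow u.
    near=> v; have v_gt0 : 0 < v by near: v; exact: lt_nbhsr.
    by rewrite spowE ?ltW.
  apply: near_eq_is_derive spow_near _.
  by rewrite gtr0_norm//; have := is_derive1_powR (p + 1) u_gt0; rewrite addrK.
- rewrite normr0 powR0 ?gt_eqF// mulr0.
  have quotient_cvg0 :
      (fun h : R => h^-1 *: ((spow \o shift 0) (h *: 1) - spow 0)) @ 0^'
        --> (0 : R).
    apply: cvg_trans normr_powR_cvg0; apply: near_eq_cvg; near=> h.
    have h0 : h != 0 by near: h; exact: nbhs_dnbhs_neq.
    rewrite /= /spow addr0 mul0r subr0 [_%:A]mulr1.
    by rewrite -[_ *: _]/(h^-1 * (h * _)) mulrA mulVf // mul1r.
  split; first by apply/cvg_ex; exists 0.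
  by rewrite /derive; apply/cvg_lim.
Unshelve. all: by end_near. Qed.

End SignedPower.

Arguments ltr_spow {R p}.
Arguments is_derive_spow {R p}.

Section IncrementComparison.
Context {R : realType}.
Variables (x0 x1 : R) (U V u' v' : R -> R).
Hypotheses (x01 : x0 <= x1)
  (U_cont : {within `[x0, x1], continuous U})
  (V_cont : {within `[x0, x1], continuous V})
  (U_derive : {in `]x0, x1[, forall y : R, is_derive y 1 U (u' y)})
  (V_derive : {in `]x0, x1[, forall y : R, is_derive y 1 V (v' y)}).

Lemma ler_increment : {in `]x0, x1[, forall y, u' y <= v' y} ->
  U x1 - U x0 <= V x1 - V x0.
Proof.
move=> uv.
suff : (V - U) x0 <= (V - U) x1 by rewrite !fctE; lra.
have VU_derive : {in `]x0, x1[, forall y : R,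
    is_derive y 1 (V - U) (v' y - u' y)}.
  by move=> y yi; apply: is_deriveB; [exact: V_derive | exact: U_derive].
apply: (@ger0_derive1_le_cc _ (V - U) x0 x1).
- by move=> y /VU_derive [].
- move=> y yi; rewrite derive1E; have [_ ->] := VU_derive _ yi.
  by rewrite subr_ge0 uv.
- apply/subspace_continuousP => y yi; apply: cvgB.
  + by move/subspace_continuousP : V_cont; exact.
  + by move/subspace_continuousP : U_cont; exact.
- by rewrite in_itv/= lexx x01.
- by rewrite in_itv/= lexx x01.
- exact: x01.
Qed.

End IncrementComparison.

Lemma ler_norm_increment {R : realType} (x0 x1 : R) (U V u' v' : R -> R) :
  x0 <= x1 ->
  {within `[x0, x1], continuous U} -> {within `[x0, x1], continuous V} ->
  {in `]x0, x1[, forall y : R, is_derive y 1 U (u' y)} ->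
  {in `]x0, x1[, forall y : R, is_derive y 1 V (v' y)} ->
  {in `]x0, x1[, forall y, `|u' y| <= v' y} ->
  `|U x1 - U x0| <= V x1 - V x0.
Proof.
move=> x01 cU cV dU dV uv; rewrite ler_norml; apply/andP; split.
- suff : (- U) x1 - (- U) x0 <= V x1 - V x0 by rewrite !fctE; lra.
  apply: (@ler_increment _ x0 x1 (- U) V (- u') v' x01 _ cV _ dV).
  + apply/subspace_continuousP => y yi; apply: cvgN.
    by move/subspace_continuousP : cU; exact.
  + by move=> y yi; apply: is_deriveN; exact: dU.
  + move=> y yi; apply: le_trans (uv _ yi); rewrite -normrN; exact: ler_norm.
- apply: (@ler_increment _ x0 x1 U V u' v' x01 cU cV dU dV) => y yi.
  exact: le_trans (ler_norm _) (uv _ yi).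
Qed.

Section Concave.
Context {R : realType}.

Definition concave_on (g : R -> R) (x0 x1 : R) : Prop :=
  forall u v t, u \in `[x0, x1] -> v \in `[x0, x1] -> 0 <= t <= 1 ->
    t * g u + (1 - t) * g v <= g (t * u + (1 - t) * v).

Lemma concave_on_sub (g : R -> R) (x0 x1 y0 y1 : R) :
  x0 <= y0 -> y1 <= x1 -> concave_on g x0 x1 -> concave_on g y0 y1.
Proof.
move=> xy0 xy1 g_conc u v t; rewrite !in_itv/= => /andP[? ?] /andP[? ?].
by apply: g_conc; rewrite in_itv/=; apply/andP; split; lra.
Qed.

Variables (g : R -> R) (x0 x1 : R).
Hypothesis g_conc : concave_on g x0 x1.

Lemma concave_slope_le x m y : x \in `[x0, x1] -> y \in `[x0, x1] ->
  x < m -> m < y -> (g y - g m) / (y - m) <= (g m - g x) / (m - x).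
Proof.
move=> xi yi xm my; have yx : 0 < y - x by lra.
set t := (y - m) / (y - x).
have t01 : 0 <= t <= 1.
  by apply/andP; split; [apply: divr_ge0 | rewrite ler_pdivrMr// mul1r]; lra.
have := g_conc _ _ _ xi yi t01.
have -> : t * x + (1 - t) * y = m by rewrite /t; field; rewrite lt0r_neq0.
rewrite -(ler_pM2l yx).
have -> : (y - x) * (t * g x + (1 - t) * g y) = (y - m) * g x + (m - x) * g y.
  by rewrite /t; field; rewrite lt0r_neq0.
rewrite ler_pdivrMr ?subr_gt0// mulrAC ler_pdivlMr ?subr_gt0//.
by move=> ?; nra.
Qed.

Lemma concave_supergradient_mid : x0 < x1 ->
  exists s, forall y, y \in `[x0, x1] ->
    g y <= g ((x0 + x1) / 2) + s * (y - (x0 + x1) / 2).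
Proof.
move=> x01; set m := (x0 + x1) / 2.
have x0m : x0 < m by rewrite /m; lra.
have mx1 : m < x1 by rewrite /m; lra.
have x0i : x0 \in `[x0, x1] by rewrite in_itv/= lexx ltW.
have x1i : x1 \in `[x0, x1] by rewrite in_itv/= lexx ltW.
pose S := [set (g y - g m) / (y - m) | y in [set y | y \in `[x0, x1] /\ m < y]].
have S_sup : has_sup S.
  split; first by exists ((g x1 - g m) / (x1 - m)), x1.
  exists ((g m - g x0) / (m - x0)) => _ [y [yi my] <-].
  exact: concave_slope_le.
exists (sup S) => y yi; have [ym|my|->] := ltgtP y m.
- have ub : ubound S ((g m - g y) / (m - y)).
    by move=> _ [w [wi mw] <-]; exact: concave_slope_le.
  have := ge_sup S_sup.1 ub; rewrite ler_pdivlMr ?subr_gt0//; nra.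
- have : (g y - g m) / (y - m) <= sup S.
    by apply: sup_upper_bound => //; exists y.
  by rewrite ler_pdivrMr ?subr_gt0//; nra.
- by rewrite subrr mulr0 addr0.
Qed.

Lemma concave_eq0_mid : {in `]x0, x1[, forall y, 0 <= g y} ->
  g ((x0 + x1) / 2) = 0 -> {in `]x0, x1[, forall y, g y = 0}.
Proof.
move=> g_ge0 gm0 y yi.
have y'i : x0 + x1 - y \in `]x0, x1[.
  by move: yi; rewrite !in_itv/= => /andP[? ?]; apply/andP; split; lra.
have closed u : u \in `]x0, x1[ -> u \in `[x0, x1].
  by rewrite !in_itv/= => /andP[? ?]; apply/andP; split; lra.
have half01 : (0 <= 2^-1 :> R) && (2^-1 <= 1 :> R) by apply/andP; split; lra.
have := g_conc _ _ _ (closed _ yi) (closed _ y'i) half01.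
have -> : 2^-1 * y + (1 - 2^-1) * (x0 + x1 - y) = (x0 + x1) / 2 by field.
have := g_ge0 _ yi; have := g_ge0 _ y'i; rewrite gm0; lra.
Qed.

End Concave.

Arguments concave_supergradient_mid {R g x0 x1}.
Arguments concave_eq0_mid {R g x0 x1}.

Section Holder.
Context {R : realType}.
Variables p q : R.
Hypotheses (p_gt0 : 0 < p) (q_gt0 : 0 < q) (pq : p^-1 + q^-1 = 1).

Lemma young_scaled (x y A B : R) : 0 <= x -> 0 <= y -> 0 < A -> 0 < B ->
  x * y <= A `^ p^-1 * B `^ q^-1 * (x `^ p / (p * A) + y `^ q / (q * B)).
Proof.
move=> x0 y0 A0 B0.
set a := A `^ p^-1; set b := B `^ q^-1.
have a0 : 0 < a by rewrite powR_gt0.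
have b0 : 0 < b by rewrite powR_gt0.
have aE : a `^ p = A by rewrite /a -powRrM mulVf ?powRr1 ?ltW ?lt0r_neq0.
have bE : b `^ q = B by rewrite /b -powRrM mulVf ?powRr1 ?ltW ?lt0r_neq0.
have inv_powR (c r : R) : 0 < c -> (c^-1) `^ r = (c `^ r)^-1.
  by move=> c0; rewrite -(powR_inv1 (ltW c0)) -powRrM mulN1r powRN.
have young := conjugate_powR (divr_ge0 x0 (ltW a0)) (divr_ge0 y0 (ltW b0))
  p_gt0 q_gt0 pq.
rewrite !powRM ?invr_ge0 ?(ltW a0) ?(ltW b0) // !inv_powR // aE bE in young.
have -> : x * y = a * b * (x / a * (y / b)) by field; rewrite !lt0r_neq0.
rewrite ler_pM2l ?mulr_gt0//; apply: le_trans young _.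
by rewrite !invfM; lra.
Qed.

Lemma holder_increment (x0 x1 : R) (U P Q k d P' Q' : R -> R) : x0 <= x1 ->
  {within `[x0, x1], continuous U} ->
  {within `[x0, x1], continuous P} ->
  {within `[x0, x1], continuous Q} ->
  {in `]x0, x1[, forall y : R, is_derive y 1 U (k y * d y)} ->
  {in `]x0, x1[, forall y : R, is_derive y 1 P (P' y)} ->
  {in `]x0, x1[, forall y : R, is_derive y 1 Q (Q' y)} ->
  {in `]x0, x1[, forall y, `|k y| `^ p <= P' y} ->
  {in `]x0, x1[, forall y, `|d y| `^ q <= Q' y} ->
  0 < P x1 - P x0 -> 0 < Q x1 - Q x0 ->
  `|U x1 - U x0| <= (P x1 - P x0) `^ p^-1 * (Q x1 - Q x0) `^ q^-1.
Proof.
move=> x01 cU cP cQ dU dP dQ kP dQ' A_gt0 B_gt0.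
set A := P x1 - P x0; set B := Q x1 - Q x0; set c := A `^ p^-1 * B `^ q^-1.
(* By Young's inequality, V' dominates |U'| = |k| |d|. *)
pose V y := c * (P y / (p * A) + Q y / (q * B)).
have -> : c = V x1 - V x0.
  rewrite /V -mulrBr -{1}[c]mulr1 -pq; congr (_ * _).
  by rewrite /A /B; field; rewrite !lt0r_neq0.
apply: (@ler_norm_increment _ x0 x1 U V (fun y => k y * d y)
  (fun y => c * (P' y / (p * A) + Q' y / (q * B)))) => //.
- apply/subspace_continuousP => y yi; apply: cvgM; first exact: cvg_cst.
  apply: cvgD; apply: cvgM; try exact: cvg_cst.
  + by move/subspace_continuousP : cP; exact.
  + by move/subspace_continuousP : cQ; exact.
- move=> y yi; rewrite /V.
  have V_der := is_deriveM (is_derive_cst c y 1) (is_deriveD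
    (is_deriveM (dP _ yi) (is_derive_cst (p * A)^-1 y 1))
    (is_deriveM (dQ _ yi) (is_derive_cst (q * B)^-1 y 1))).
  apply: is_derive_eq V_der _.
  by rewrite !scaler0 !add0r addr0 /cst /GRing.scale /=; ring.
- move=> y yi; rewrite normrM.
  apply: le_trans
    (young_scaled _ _ _ _ (normr_ge0 _) (normr_ge0 _) A_gt0 B_gt0) _.
  rewrite ler_pM2l ?mulr_gt0 ?powR_gt0// lerD// ler_pM2r ?invr_gt0 ?mulr_gt0//.
  + exact: kP.
  + exact: dQ'.
Qed.

Lemma mul_powR_conj (c x y : R) : 0 <= c -> 0 <= x -> 0 <= y ->
  (c * x) `^ p^-1 * (c * y) `^ q^-1 = c * (x `^ p^-1 * y `^ q^-1).
Proof.
by move=> c0 x0 y0; rewrite !powRM// mulrACA -powRD ?pq ?oner_eq0 ?powRr1.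
Qed.

Lemma holder_concave_increment (x0 x1 : R) (U P k d P' g : R -> R) : x0 < x1 ->
  {within `[x0, x1], continuous U} ->
  {within `[x0, x1], continuous P} ->
  {in `]x0, x1[, forall y : R, is_derive y 1 U (k y * d y)} ->
  {in `]x0, x1[, forall y : R, is_derive y 1 P (P' y)} ->
  {in `]x0, x1[, forall y, `|k y| `^ p <= P' y} ->
  0 < P x1 - P x0 ->
  concave_on g x0 x1 -> {in `]x0, x1[, forall y, `|d y| `^ q <= g y} ->
  `|U x1 - U x0| <=
    (P x1 - P x0) `^ p^-1 * ((x1 - x0) * g ((x0 + x1) / 2)) `^ q^-1.
Proof.
move=> x01 cU cP dU dP kP A_gt0 g_conc dg.
set m := (x0 + x1) / 2.
have mi : m \in `]x0, x1[ by rewrite in_itv/= /m; apply/andP; split; lra.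
have g_ge0 : {in `]x0, x1[, forall y, 0 <= g y}.
  by move=> y yi; apply: le_trans (dg _ yi); exact: powR_ge0.
have [gm0|gm_neq0] := eqVneq (g m) 0.
  have d0 : {in `]x0, x1[, forall y, d y = 0}.
    move=> y yi; apply/normr0_eq0/(@powR_eq0_eq0 _ _ q)/eqP.
    by rewrite eq_le powR_ge0 andbT -(concave_eq0_mid g_conc g_ge0 gm0 _ yi) dg.
  rewrite gm0 mulr0 powR0 ?invr_eq0 ?lt0r_neq0// mulr0.
  have := @ler_norm_increment _ x0 x1 U (cst 0) (fun y => k y * d y) (cst 0)
    (ltW x01) cU; rewrite subrr; apply => //.
  - exact/continuous_subspaceT/cst_continuous.
  - by move=> y _; exact: is_derive_cst.
  - by move=> y yi; rewrite d0 // mulr0 normr0.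
have gm_gt0 : 0 < g m by rewrite lt0r gm_neq0 g_ge0.
have [s gs] := concave_supergradient_mid g_conc x01; rewrite -/m in gs.
(* Q' is the supergradient line at m, so it dominates g while Q increases by
   exactly (x1 - x0) g m: the Hermite-Hadamard inequality in primitive form. *)
pose Q y := g m * y + s / 2 * ((y - m) * (y - m)).
have dQ (y : R) : is_derive y 1 Q (g m + s * (y - m)).
  have dm := is_deriveB (is_derive_id y 1) (is_derive_cst m y 1).
  have Q_der := is_deriveD
    (is_deriveM (is_derive_cst (g m) y 1) (is_derive_id y 1))
    (is_deriveM (is_derive_cst (s / 2) y 1) (is_deriveM dm dm)).
  apply: is_derive_eq Q_der _.
  by rewrite /GRing.scale /= /cst !fctE /=; field.
have QE : Q x1 - Q x0 = (x1 - x0) * g m by rewrite /Q /m; field.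
rewrite -QE.
apply: (holder_increment x0 x1 U P Q k d P' (fun y => g m + s * (y - m))) => //.
- exact: ltW.
- by apply: derivable_within_continuous => y _; case: (dQ y).
- move=> y yi; apply: le_trans (dg _ yi) _.
  by apply: gs; rewrite subset_itv_oo_cc.
- by rewrite QE mulr_gt0// subr_gt0.
Qed.

End Holder.

(* (p + 1) times the integral of |u|^p over [- al lam, 1 - al - al lam];
   eps1 and eps2 are its closed forms for the two signs of the upper bound. *)
Definition eps_spow {R : realType} (p al lam : R) : R :=
  spow p (1 - al - al * lam) + spow p (al * lam).

Section EpsClosedForms.
Context {R : realType}.
Variables (p al lam : R).
Hypotheses (p_gt0 : 0 < p) (al_lam_ge0 : 0 <= al * lam).

Lemma eps_spow_eps1 : al * lam <= 1 - al -> eps_spow p al lam = eps1 al lam p.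
Proof. by move=> h; rewrite /eps_spow /eps1 !spowE ?subr_ge0// addrC. Qed.

Lemma eps_spow_eps2 : 1 - al <= al * lam -> eps_spow p al lam = eps2 al lam p.
Proof.
move=> h; rewrite /eps_spow /eps2.
rewrite (_ : 1 - al - al * lam = - (al * lam - 1 + al)); last by ring.
by rewrite spowN !spowE// 1?addrC//; lra.
Qed.

End EpsClosedForms.

Section KernelIncrement.
Context {R : realType}.
Variables (f : R -> R) (a b p q : R).
Hypotheses (ab : a < b) (f_derivable : forall y, a <= y <= b -> derivable f y 1)
  (p_gt0 : 0 < p) (q_gt0 : 0 < q) (pq : p^-1 + q^-1 = 1)
  (f'_concave : concave_on (fun y => `|derive1 f y| `^ q) a b).

Local Notation D := (b - a).
Local Notation F := (fun y => parameterized_integral lebesgue_measure a y f).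

Let D_gt0 : 0 < D. Proof. by rewrite subr_gt0. Qed.

Let f_cont : {within `[a, b], continuous f}.
Proof.
apply: derivable_within_continuous => y.
by rewrite in_itv/=; exact: f_derivable.
Qed.

Let F_cont : {within `[a, b], continuous F}.
Proof.
apply: parameterized_integral_continuous (ltW ab) _.
by apply: continuous_compact_integrable => //; exact: segment_compact.
Qed.

Let F_derive : {in `]a, b[, forall y : R, is_derive y 1 F (f y)}.
Proof.
move=> y; rewrite in_itv/= => /andP[ay yb].
have f_int : lebesgue_measure.-integrable `[a, b] (EFin \o f).
  by apply: continuous_compact_integrable => //; exact: segment_compact.
have [|F_der F'E] := continuous_FTC1_closed yb f_int ay.
  by apply/differentiable_continuous/derivable1_diffP/f_derivable; rewrite !ltW.
by apply: (DeriveDef F_der); rewrite -derive1E.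
Qed.

Let U z y := (y - z) / D * f y - F y / D.

Let U_cont z : {within `[a, b], continuous (U z)}.
Proof.
apply/subspace_continuousP => y yi; apply: cvgB; apply: cvgM.
- apply: cvgM; last exact: cvg_cst.
  by apply: cvgB; [exact: cvg_within_filter (cvg_id) | exact: cvg_cst].
- by move/subspace_continuousP : f_cont; exact.
- by move/subspace_continuousP : F_cont; exact.
- exact: cvg_cst.
Qed.

Let U_derive z :
  {in `]a, b[, forall y : R, is_derive y 1 (U z) ((y - z) / D * derive1 f y)}.
Proof.
move=> y yi; have /andP[ay yb] : a < y < b by rewrite in_itv/= in yi.
have f_der : is_derive y 1 f (derive1 f y).
  by rewrite derive1E; apply/derivableP/f_derivable; rewrite !ltW.
have kernel := is_deriveM
  (is_deriveB (is_derive_id y 1) (is_derive_cst z y 1))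
  (is_derive_cst D^-1 y 1).
have U_der := is_deriveB (is_deriveM kernel f_der)
  (is_deriveM (F_derive _ yi) (is_derive_cst D^-1 y 1)).
apply: is_derive_eq U_der _.
by rewrite /GRing.scale /= /cst !fctE /=; field; rewrite lt0r_neq0.
Qed.

Let kernel_increment_le (z x0 x1 : R) : a <= x0 -> x0 <= x1 -> x1 <= b ->
  `|U z x1 - U z x0| <= D * (p + 1)^-1 `^ p^-1 *
    ((spow p ((x1 - z) / D) - spow p ((x0 - z) / D)) `^ p^-1 *
     ((x1 - x0) / D * `|derive1 f ((x0 + x1) / 2)| `^ q) `^ q^-1).
Proof.
move=> ax0; rewrite le_eqVlt => /predU1P[<- _|x01 x1b].
  by rewrite subrr normr0 !mulr_ge0 ?powR_ge0 ?ltW.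
set e := spow p _ - spow p _.
have e_gt0 : 0 < e by rewrite subr_gt0 ltr_spow// ltr_pM2r ?invr_gt0// ltrD2r.
pose P y := D / (p + 1) * spow p ((y - z) / D).
have P_derive (y : R) : is_derive y 1 P (`|(y - z) / D| `^ p).
  have lin : is_derive y 1 (fun y => (y - z) / D) D^-1.
    have := is_deriveM (is_deriveB (is_derive_id y 1) (is_derive_cst z y 1))
      (is_derive_cst D^-1 y 1).
    move/is_derive_eq; apply.
    by rewrite /GRing.scale /= mulr0 add0r subr0 mulr1.
  have := is_deriveZ (D / (p + 1))
    (is_derive1_comp (is_derive_spow p_gt0 _) lin).
  move/is_derive_eq; apply; rewrite /GRing.scale /=.
  by field; rewrite (lt0r_neq0 D_gt0) lt0r_neq0 ?addr_gt0.
have sub_cc : `[x0, x1] `<=` `[a, b] by apply: subset_itv; rewrite bnd_simp.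
have sub_oo : `]x0, x1[ `<=` `]a, b[ by apply: subset_itvW.
rewrite -mulrA (mulrA ((p + 1)^-1 `^ p^-1)) -powRM ?invr_ge0 ?(ltW e_gt0)
  ?addr_ge0 ?(ltW p_gt0)//.
have := @holder_concave_increment _ p q p_gt0 q_gt0 pq x0 x1 (U z) P
  (fun y => (y - z) / D) (derive1 f) (fun y => `|(y - z) / D| `^ p)
  (fun y => `|derive1 f y| `^ q) x01.
have -> : P x1 - P x0 = D * ((p + 1)^-1 * e) by rewrite /P /e; ring.
have -> : (x1 - x0) * `|derive1 f ((x0 + x1) / 2)| `^ q =
  D * ((x1 - x0) / D * `|derive1 f ((x0 + x1) / 2)| `^ q).
  by field; rewrite lt0r_neq0.
have Pge0 : 0 <= (p + 1)^-1 * e.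
  by apply: mulr_ge0; [rewrite invr_ge0 addr_ge0 ?ltW | exact: ltW].
have Gge0 : 0 <= (x1 - x0) / D * `|derive1 f ((x0 + x1) / 2)| `^ q.
  by rewrite mulr_ge0 ?powR_ge0// divr_ge0 ?subr_ge0 ?ltW.
rewrite mul_powR_conj ?(ltW D_gt0)//.
apply.
- exact: continuous_subspaceW (U_cont z).
- by apply: derivable_within_continuous => y _; case: (P_derive y).
- by move=> y /sub_oo; exact: U_derive.
- by move=> y _; exact: P_derive.
- by move=> y _.
- by rewrite !mulr_gt0 // invr_gt0 addr_gt0.
- exact: concave_on_sub f'_concave.
- by move=> y _.
Qed.

Lemma I_f_le_concave (al lam : R) : 0 <= al <= 1 ->
  `|I_f f lam al a b| <= D * (p + 1)^-1 `^ p^-1 *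
    ((eps_spow p al lam) `^ p^-1 * (E_f f a b al q) `^ q^-1
     + (eps_spow p (1 - al) lam) `^ p^-1 * (F_f f a b al q) `^ q^-1).
Proof.
move=> /andP[al0 al1].
set c := al * a + (1 - al) * b.
have caE : c - a = (1 - al) * D by rewrite /c; ring.
have bcE : b - c = al * D by rewrite /c; ring.
have ac : a <= c by rewrite -subr_ge0 caE mulr_ge0 ?subr_ge0 // ltW.
have cb : c <= b by rewrite -subr_ge0 bcE mulr_ge0 ?subr_ge0 // ltW.
have D_neq0 : D != 0 by rewrite lt0r_neq0.
set z1 := a + al * lam * D; set z2 := a + (1 - lam * (1 - al)) * D.
have F_a : F a = 0 by rewrite /parameterized_integral set_itv1 Rintegral_set1.
have I_f_split : I_f f lam al a b = (U z1 c - U z1 a) + (U z2 b - U z2 c).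
  rewrite /I_f /U F_a; change (Rintegral lebesgue_measure `[a, b] f) with (F b).
  by rewrite /z1 /z2 /c; field.
have eps_al : eps_spow p al lam = spow p ((c - z1) / D) - spow p ((a - z1) / D).
  have -> : (a - z1) / D = - (al * lam) by rewrite /z1; field.
  by rewrite spowN opprK /eps_spow /c /z1; congr (spow p _ + _); field.
have eps_1al :
    eps_spow p (1 - al) lam = spow p ((b - z2) / D) - spow p ((c - z2) / D).
  have -> : (c - z2) / D = - (1 - (1 - al) - (1 - al) * lam).
    by rewrite /c /z2; field.
  by rewrite spowN opprK /eps_spow addrC /z2; congr (spow p _ + _); field.
have E_fE : E_f f a b al q = (c - a) / D * `|derive1 f ((a + c) / 2)| `^ q.
  have -> : (c - a) / D = 1 - al by rewrite caE mulfK.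
  by rewrite /E_f; congr (_ * `|derive1 f _| `^ q); rewrite /c; field.
have F_fE : F_f f a b al q = (b - c) / D * `|derive1 f ((c + b) / 2)| `^ q.
  have -> : (b - c) / D = al by rewrite bcE mulfK.
  by rewrite /F_f; congr (_ * `|derive1 f _| `^ q); rewrite /c; field.
rewrite I_f_split E_fE F_fE eps_al eps_1al mulrDr.
apply: le_trans (ler_normD _ _) _.
by apply: lerD; apply: kernel_increment_le.
Qed.

End KernelIncrement.

Arguments I_f_le_concave {R f a b p q}.

Lemma gtr1_powR {R : realType} (a r : R) : 0 < a < 1 -> r < 1 -> a < a `^ r.
Proof.
move=> /andP[a_gt0 a_lt1] r_lt1.
rewrite /powR gt_eqF// -{1}(@lnK _ a) ?posrE// ltr_expR.
have := @ln_lt0 _ a; rewrite a_gt0 a_lt1 => /(_ isT) ln_lt0.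
nra.
Qed.

Section SConcave.
Context {R : realType}.
Variables (s : R) (g : R -> R) (a b : R).
Hypothesis g_sconc : s_concave s g a b.

Lemma s_concave_concave_on : 0 < s <= 1 -> concave_on g a b.
Proof.
case: g_sconc => g_ge0 g_conc /andP[s_gt0 s_le1] u v t ui vi t01.
have le_powR (r : R) : 0 <= r <= 1 -> r <= r `^ s.
  case/andP; rewrite le_eqVlt => /predU1P[<- _|r0 r1]; first exact: powR_ge0.
  by apply: ger1_powR; rewrite ?r0.
apply: le_trans (g_conc u v t ui vi t01); apply: lerD; apply: ler_wpM2r.
- exact: g_ge0.
- exact: le_powR.
- exact: g_ge0.
- by apply: le_powR; move: t01 => /andP[? ?]; apply/andP; split; lra.
Qed.

Lemma s_concave_eq0 : s < 1 -> {in `[a, b], forall x, g x = 0}.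
Proof.
case: g_sconc => g_ge0 g_conc s_lt1 x xi.
have half01 : (0 <= 2^-1 :> R) && (2^-1 <= 1 :> R) by apply/andP; split; lra.
have := g_conc x x 2^-1 xi xi half01.
have -> : 2^-1 * x + (1 - 2^-1) * x = x by ring.
have -> : 1 - 2^-1 = 2^-1 :> R by field.
have : 2^-1 < 2^-1 `^ s :> R by apply: gtr1_powR => //; apply/andP; split; lra.
have := g_ge0 x xi; move: (g x) => y; nra.
Qed.

End SConcave.

Arguments s_concave_concave_on {R s g a b}.
Arguments s_concave_eq0 {R s g a b}.

Section SConcaveLt1.
Context {R : realType}.
Variables (f : R -> R) (a b s q al : R).
Hypotheses (ab : a < b) (s_lt1 : s < 1) (al01 : 0 <= al <= 1)
  (f'_sconc : s_concave s (fun x => `|derive1 f x| `^ q) a b).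

Let f'_eq0 x : x \in `[a, b] -> `|derive1 f x| `^ q = 0.
Proof. exact: s_concave_eq0 f'_sconc s_lt1 x. Qed.

Let ba : 0 <= b - a. Proof. by rewrite subr_ge0 ltW. Qed.

Lemma E_f_eq0 : E_f f a b al q = 0.
Proof.
have /andP[al0 al1] := al01.
have h1 : 0 <= (1 - al) * (b - a) by rewrite mulr_ge0 // subr_ge0.
have h2 : 0 <= (1 + al) * (b - a) by rewrite mulr_ge0 // addr_ge0.
rewrite /E_f f'_eq0 ?mulr0// in_itv/=; apply/andP; split; lra.
Qed.

Lemma F_f_eq0 : F_f f a b al q = 0.
Proof.
have /andP[al0 al1] := al01.
have h1 : 0 <= al * (b - a) by rewrite mulr_ge0.
have h2 : 0 <= (2 - al) * (b - a) by apply: mulr_ge0 => //; lra.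
rewrite /F_f f'_eq0 ?mulr0// in_itv/=; apply/andP; split; lra.
Qed.

End SConcaveLt1.

Arguments E_f_eq0 {R f a b s q al}.
Arguments F_f_eq0 {R f a b s q al}.

Lemma interior_segment {R : realType} (I : set R) (a b y : R) :
  is_interval I -> interior I a -> interior I b -> a <= y <= b -> interior I y.
Proof.
move=> I_itv Ia Ib /andP[ay yb].
have [<-//|ay'] := eqVneq a y; have [->//|yb'] := eqVneq y b.
have yi : y \in `]a, b[ by rewrite in_itv/= !lt_neqAle ay' ay yb' yb.
apply: filterS (near_in_itvoo yi) => z; rewrite in_itv/= => /andP[az zb].
apply: (I_itv a b) (interior_subset Ia) (interior_subset Ib) _ _.
by rewrite !ltW.
Qed.

Lemma I_f_le_s_concave {R : realType} (f : R -> R) (a b al lam s p q : R) :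
  a < b -> (forall y, a <= y <= b -> derivable f y 1) ->
  0 < p -> 0 < q -> p^-1 + q^-1 = 1 -> 0 <= al <= 1 -> 0 < s <= 1 ->
  s_concave s (fun x => `|derive1 f x| `^ q) a b ->
  `|I_f f lam al a b| <=
    (b - a) * 2 `^ ((s - 1) / q) * (1 / (p + 1)) `^ (1 / p) *
    ((eps_spow p al lam) `^ (1 / p) * (E_f f a b al q) `^ (1 / q)
     + (eps_spow p (1 - al) lam) `^ (1 / p) * (F_f f a b al q) `^ (1 / q)).
Proof.
move=> ab f_der p_gt0 q_gt0 pq al01 s01 f'_sconc.
apply: le_trans (I_f_le_concave ab f_der p_gt0 q_gt0 pq
  (s_concave_concave_on f'_sconc s01) al lam al01) _; rewrite !div1r.
have scale (w K : R) : w = 1 \/ K = 0 ->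
    (b - a) * (p + 1)^-1 `^ p^-1 * K <= (b - a) * w * (p + 1)^-1 `^ p^-1 * K.
  by case=> ->; rewrite ?mulr1 ?mulr0.
apply: scale; have [->|s_neq1] := eqVneq s 1; [left | right].
  by rewrite subrr mul0r powRr0.
have s_lt1 : s < 1 by rewrite lt_neqAle s_neq1; case/andP: s01.
have K0 (x y : R) : x * 0 `^ q^-1 + y * 0 `^ q^-1 = 0.
  by rewrite powR0 ?invr_eq0 ?lt0r_neq0// !mulr0 addr0.
by rewrite (E_f_eq0 ab s_lt1 al01 f'_sconc) (F_f_eq0 ab s_lt1 al01 f'_sconc) K0.
Qed.

Theorem theorem2p5 (R : realType) (I : set R) (f : R -> R) (a b al lam s p q : R) :
  is_interval I ->
  (forall x, interior I x -> derivable f x 1) ->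
  interior I a -> interior I b -> a < b ->
  lebesgue_measure.-integrable `[a, b] (fun x => (derive1 f x)%:E) ->
  0 <= al <= 1 -> 0 <= lam <= 1 ->
  0 < s <= 1 -> 1 < q -> p^-1 + q^-1 = 1 ->
  s_concave s (fun x => `| derive1 f x | `^ q) a b ->
  let C := (b - a) * 2 `^ ((s - 1) / q) * (1 / (p + 1)) `^ (1 / p) in
  (al * lam <= 1 - al <= 1 - lam * (1 - al) ->
     `| I_f f lam al a b | <= C *
       ((eps1 al lam p) `^ (1 / p) * (E_f f a b al q) `^ (1 / q)
        + (eps1 (1 - al) lam p) `^ (1 / p) * (F_f f a b al q) `^ (1 / q))) /\
  (al * lam <= 1 - lam * (1 - al) <= 1 - al ->
     `| I_f f lam al a b | <= C *
       ((eps1 al lam p) `^ (1 / p) * (E_f f a b al q) `^ (1 / q)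
        + (eps2 (1 - al) lam p) `^ (1 / p) * (F_f f a b al q) `^ (1 / q))) /\
  (1 - al <= al * lam <= 1 - lam * (1 - al) ->
     `| I_f f lam al a b | <= C *
       ((eps2 al lam p) `^ (1 / p) * (E_f f a b al q) `^ (1 / q)
        + (eps1 (1 - al) lam p) `^ (1 / p) * (F_f f a b al q) `^ (1 / q))).
Proof.
move=> I_itv f_der a_int b_int ab _ al01 /andP[lam0 _] s01 q1 pq f'_sconc C.
have q_gt0 : 0 < q := lt_trans ltr01 q1.
have p_gt0 : 0 < p.
  by rewrite -invr_gt0 -[p^-1](addrK q^-1) pq subr_gt0 invf_lt1.
have f_der_ab y : a <= y <= b -> derivable f y 1.
  by move=> yab; apply: f_der; exact: interior_segment yab.
suff le_C e1 e2 : eps_spow p al lam = e1 -> eps_spow p (1 - al) lam = e2 ->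
    `| I_f f lam al a b | <= C *
      (e1 `^ (1 / p) * (E_f f a b al q) `^ (1 / q)
       + e2 `^ (1 / p) * (F_f f a b al q) `^ (1 / q)).
  have /andP[al0 al1] := al01.
  have al_lam0 : 0 <= al * lam by rewrite mulr_ge0.
  have al'_lam0 : 0 <= (1 - al) * lam by rewrite mulr_ge0 ?subr_ge0.
  split; [|split] => /andP[h1 h2]; apply: le_C.
  - by rewrite eps_spow_eps1.
  - by rewrite eps_spow_eps1//; lra.
  - by rewrite eps_spow_eps1//; lra.
  - by rewrite eps_spow_eps2//; lra.
  - by rewrite eps_spow_eps2.
  - by rewrite eps_spow_eps1//; lra.
by move=> <- <-; exact: I_f_le_s_concave.
Qed.
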